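(* Let $\sigma_0$ be a strictly positive random variable with $L(x):=1/\mathbb{P}(\sigma_0>x)$ slowly varying at infinity (i.e. $\lim_{u\to\infty}L(uv)/L(u)=1$ for every $v>0$), and let $Y=\{Y_n\}_{n\in\mathbb{N}}$ be i.i.d. with the law of $\sigma_0$. Let $h_t$ be any function with $h_t\to\infty$, $h_t^2=o(r_t)$, and such that, for all sufficiently large $t$, \[ L(\ell_t/h_t^3)>L(\ell_t)(1-1/h_t)\quad\text{and}\quad L(\ell_th_t^3)<L(\ell_t)(1+1/h_t).\] Then, as $t\to\infty$, \[ \mathbb{P}\Big(Y_{n_{\ell_t}}>\frac{th_t^2}{r_t}\Big)\to1.\]
   Context: $\ell_t:=\min\{s\ge0: sL(s)\ge t\}$ and $r_t:=L(\ell_t)$. For $n\ge0$, $M_n:=\max\{Y_i: i\le\lfloor n\rfloor\}$. For a level $l>0$, $n_l:=\min\{n\in\mathbb{N}: M_n>l\}$ is the index of the first exceedance of $l$. *)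

From HB Require Import structures.
From mathcomp Require Import all_boot all_order all_algebra.
From mathcomp Require Import all_classical all_reals all_analysis.
Set Implicit Arguments. Unset Strict Implicit. Unset Printing Implicit Defensive.
Import Order.TTheory GRing.Theory Num.Theory.
Import numFieldNormedType.Exports.
Local Open Scope classical_set_scope.
Local Open Scope ring_scope.

Section Defs.
Context {R : realType}.

Definition Ltail {d} {T : measurableType d} (P : probability T R)
  (X : {RV P >-> R}) (x : R) : R :=
  (fine (P [set w | x < X w]))^-1.

Definition slowly_varying (L : R -> R) : Prop :=
  forall v : R, 0 < v -> (fun u => L (u * v) / L u) @ +oo --> (1 : R).

(** ell_t := min { s >= 0 : s L(s) >= t } (written as an infimum; the set is
    an up-closed set whose infimum is attained). *)
Definition ell (L : R -> R) (t : R) : R :=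
  inf [set s : R | 0 <= s /\ t <= s * L s].

Definition littleo_pinfty (f g : R -> R) : Prop :=
  forall eps : R, 0 < eps -> \forall t \near +oo, `|f t| <= eps * `|g t|.

Definition rr (L : R -> R) (t : R) : R := L (ell L t).

Definition mutually_independent {d} {T : measurableType d}
  (P : probability T R) (Y : nat -> {RV P >-> R}) : Prop :=
  forall (I : seq nat) (B : nat -> set R),
    uniq I -> (forall i, measurable (B i)) ->
    P (\bigcap_(i in [set` I]) (Y i @^-1` B i)) =
      (\prod_(i <- I) P (Y i @^-1` B i))%E.

Definition Mmax {T : Type} (Y : nat -> T -> R) (n : nat) (w : T) : R :=
  \big[Order.max/Y 0%N w]_(i < n.+1) Y i w.

(** n_l(w) = n, i.e. n is the least index with M_n(w) > l. *)
Definition first_exceed {T : Type} (Y : nat -> T -> R) (l : R) (n : nat)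
  (w : T) : Prop :=
  l < Mmax Y n w /\ forall m : nat, (m < n)%N -> Mmax Y m w <= l.

Definition exceed_event {T : Type} (Y : nat -> T -> R) (l c : R) : set T :=
  [set w | exists n : nat, first_exceed Y l n w /\ c < Y n w].

End Defs.

(* Write l = ell_t and a = ell_t h_t^3.  For l <= a the event {Y_{n_l} > a} is the disjoint
   union over n of {Y_0, ..., Y_{n-1} <= l < a < Y_n}, of probability P(s0 <= l)^n P(s0 > a);
   summing the geometric series, P(Y_{n_l} > a) = P(s0 > a) / P(s0 > l) = L(l) / L(a), which
   exceeds 1 / (1 + 1/h_t) by the upper condition on L(ell_t h_t^3).  As ell_t is an infimum
   and L is nondecreasing, t <= 2 ell_t L(2 ell_t) <= 4 ell_t r_t, so the threshold
   t h_t^2 / r_t lies below a as soon as h_t >= 4. *)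

From HB Require Import structures.
From mathcomp Require Import all_boot all_order all_algebra.
From mathcomp Require Import all_classical all_reals all_analysis.
From mathcomp Require Import ring lra.

Set Implicit Arguments.
Unset Strict Implicit.
Unset Printing Implicit Defensive.
Import Order.TTheory GRing.Theory Num.Theory.
Import numFieldNormedType.Exports.
Local Open Scope classical_set_scope.
Local Open Scope ring_scope.

Section survival_function.
Context {R : realType} {d : measure_display} {T : measurableType d}
  {P : probability T R} (X : {RV P >-> R}).

Lemma measurable_rv_gt (x : R) : measurable [set w | x < X w].
Proof.
rewrite (_ : [set w | x < X w] = X @^-1` [set` `]x, +oo[]); last first.
  by apply/seteqP; split => w /=; rewrite in_itv /= andbT.
exact: measurable_funPTI (measurable_itv _).
Qed.

Lemma measurable_rv_le (x : R) : measurable [set w | X w <= x].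
Proof.
rewrite (_ : [set w | X w <= x] = X @^-1` [set` `]-oo, x]]); last first.
  by apply/seteqP; split => w /=; rewrite in_itv.
exact: measurable_funPTI (measurable_itv _).
Qed.

Definition survival (x : R) : R := fine (P [set w | x < X w]).

Lemma survivalE x : P [set w | x < X w] = (survival x)%:E.
Proof. by rewrite fineK // (fin_num_measure P _ (measurable_rv_gt x)). Qed.

Lemma survival_ge0 x : 0 <= survival x.
Proof. exact/fine_ge0/measure_ge0. Qed.

Lemma survival_le1 x : survival x <= 1.
Proof. by rewrite -lee_fin -survivalE probability_le1 //; exact: measurable_rv_gt. Qed.

Lemma le_survival : {homo survival : x y /~ x <= y}.
Proof.
move=> x y xy; rewrite -lee_fin -!survivalE.
apply: le_measure; rewrite ?inE; try exact: measurable_rv_gt.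
by move=> w /=; exact: le_lt_trans.
Qed.

Lemma prob_rv_le x : P [set w | X w <= x] = (1 - survival x)%:E.
Proof.
rewrite (_ : [set w | X w <= x] = ~` [set w | x < X w]); last first.
  by apply/seteqP; split => w /=; rewrite leNgt => /negP.
by rewrite probability_setC ?survivalE //; exact: measurable_rv_gt.
Qed.

Lemma slowly_varying_survival_gt0 :
  slowly_varying (Ltail X) -> forall x, 0 < survival x.
Proof.
move=> sv x; rewrite lt_neqAle survival_ge0 andbT; apply/negP => /eqP Gx0.
have /cvgrPdist_lt/(_ (1/2)) near_one := sv 1 ltr01.
suff : \forall u \near (+oo : set_system R), False by move/filter_ex => [].
near=> u.
have Gu0 : survival u = 0.
  apply/eqP; rewrite eq_le survival_ge0 andbT Gx0; apply: le_survival.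
  by near: u; apply: nbhs_pinfty_ge; exact: num_real.
have : `|1 - Ltail X (u * 1) / Ltail X u| < 1/2 by near: u; apply: near_one; lra.
rewrite /Ltail mulr1 -/(survival u) Gu0 !invr0 mulr0 subr0 normr1; lra.
Unshelve. all: by end_near.
Qed.

Section positive_survival.
Hypothesis survival_gt0 : forall x, 0 < survival x.

Lemma Ltail_ge1 x : 1 <= Ltail X x.
Proof. by rewrite invf_ge1 ?survival_gt0 ?survival_le1. Qed.

Lemma le_Ltail : {homo Ltail X : x y / x <= y}.
Proof. by move=> x y xy; rewrite lef_pV2 ?posrE ?survival_gt0 ?le_survival. Qed.

End positive_survival.

End survival_function.

Section first_exceedance.
Context {R : realType} {T : Type} (Y : nat -> T -> R).

Lemma Mmax_leP m l w : Mmax Y m w <= l <-> forall i, (i <= m)%N -> Y i w <= l.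
Proof.
split => [/bigmax_leP[_ Yl] i im | Yl].
  exact: (Yl (Ordinal (im : (i < m.+1)%N))).
by apply/bigmax_leP; split => [|i _]; apply: Yl; rewrite // -ltnS.
Qed.

Lemma first_exceedP l n w :
  first_exceed Y l n w <-> (forall i, (i < n)%N -> Y i w <= l) /\ l < Y n w.
Proof.
split => [[lM Ml] | [Yl lY]].
  split => [i ilt|]; first exact: (proj1 (Mmax_leP _ _ _) (Ml i ilt) i).
  rewrite ltNge; apply: contraTN lM => Ynl; rewrite -leNgt.
  apply/Mmax_leP => i; rewrite leq_eqVlt => /orP[/eqP -> // | ilt].
  by move/Mmax_leP: (Ml i ilt); apply.
split => [|m mn]; last by apply/Mmax_leP => i im; apply: Yl; exact: leq_ltn_trans mn.
by apply: (lt_le_trans lY); exact: (le_bigmax _ _ ord_max).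
Qed.

Definition exceed_at (l b : R) (n : nat) : set T :=
  [set w | (forall i, (i < n)%N -> Y i w <= l) /\ b < Y n w].

Lemma exceed_eventE l c :
  exceed_event Y l c = \bigcup_n exceed_at l (Num.max l c) n.
Proof.
apply/seteqP; split => w /=.
  by move=> [n [/first_exceedP[Yl lY] cY]]; exists n => //; split; rewrite // gt_max lY.
move=> [n _ [Yl]]; rewrite gt_max => /andP[lY cY].
by exists n; split => //; apply/first_exceedP.
Qed.

Lemma subset_exceed_at l a b n : a <= b -> exceed_at l b n `<=` exceed_at l a n.
Proof. by move=> ab w [Yl bY]; split => //; exact: le_lt_trans bY. Qed.

Lemma trivIset_exceed_at l b : l <= b -> trivIset setT (exceed_at l b).
Proof.
move=> lb n m _ _ [w [[Yln bYn] [Ylm bYm]]].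
have [nm|mn|//] := ltngtP n m.
  by move: (Ylm n nm); rewrite leNgt (le_lt_trans lb bYn).
by move: (Yln m mn); rewrite leNgt (le_lt_trans lb bYm).
Qed.

End first_exceedance.

Section ell_bounds.
Context {R : realType} (L : R -> R).
Hypothesis L_ge1 : forall x, 1 <= L x.
Hypothesis le_L : {homo L : x y / x <= y}.

Let ell_set t := [set s : R | 0 <= s /\ t <= s * L s].

Let ell_set_neq0 t : 0 <= t -> ell_set t !=set0.
Proof. by move=> t0; exists t; split; rewrite // ler_peMr. Qed.

Lemma ell_gt0 t : 0 < t -> 0 < ell L t.
Proof.
move=> t0; have S0 := ell_set_neq0 (ltW t0).
have ell0 : 0 <= ell L t by apply: lb_le_inf S0 _ => s [].
rewrite lt_neqAle ell0 andbT; apply/negP => /eqP ell_eq0.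
have L1_gt0 : 0 < L 1 by apply: lt_le_trans (L_ge1 1).
pose e := Num.min 1 (t / (2 * L 1)).
have e_gt0 : 0 < e by rewrite lt_min ltr01 divr_gt0 // mulr_gt0.
have [s [s0 ts] se] : exists2 s, ell_set t s & s < e.
  by apply: inf_lt => //; rewrite -/(ell L t) -ell_eq0.
have s1 : s <= 1 by apply/ltW/(lt_le_trans se); rewrite ge_min lexx.
have st : s <= t / (2 * L 1) by apply/ltW/(lt_le_trans se); rewrite ge_min lexx orbT.
have : s * L s <= t / (2 * L 1) * L 1.
  by apply: le_trans (ler_wpM2r (ltW L1_gt0) st); rewrite ler_wpM2l // le_L.
have -> : t / (2 * L 1) * L 1 = t / 2 by field; rewrite gt_eqF.
lra.
Qed.

Lemma le_ell_mul2 t : 0 < t -> t <= 2 * ell L t * L (2 * ell L t).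
Proof.
move=> t0; have ell_pos := ell_gt0 t0.
have [s [s0 ts] s_lt] : exists2 s, ell_set t s & s < 2 * ell L t.
  by apply: inf_lt; [exact: ell_set_neq0 (ltW t0) | rewrite -/(ell L t); lra].
apply: (le_trans ts); apply: ler_pM => //; last exact/le_L/ltW.
  by apply: le_trans (L_ge1 s).
exact: ltW.
Qed.

Lemma le_ell_mul4 t hv : 0 < t -> 2 <= hv ->
  L (ell L t * hv ^+ 3) < L (ell L t) * (1 + hv^-1) ->
  t <= 4 * ell L t * L (ell L t).
Proof.
move=> t0 hv2 Lbound; set l := ell L t in Lbound *.
have l_gt0 : 0 < l := ell_gt0 t0.
have hv3 : 2 <= hv ^+ 3 by rewrite !exprS expr0 mulr1; nra.
have hv1 : hv^-1 <= 1 by rewrite invf_le1; lra.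
have L2 : L (2 * l) <= 2 * L l.
  have : L (2 * l) <= L (l * hv ^+ 3) by apply: le_L; nra.
  have := L_ge1 l; nra.
have := le_ell_mul2 t0; rewrite -/l; nra.
Qed.

End ell_bounds.

Section iid_first_exceedance.
Context {R : realType} {d0 : measure_display} {T0 : measurableType d0}
  (P0 : probability T0 R) (sigma0 : {RV P0 >-> R})
  {d : measure_display} {T : measurableType d} (P : probability T R)
  (Y : nat -> {RV P >-> R}).
Hypothesis Y_law : forall n (B : set R), measurable B ->
  P (Y n @^-1` B) = P0 (sigma0 @^-1` B).
Hypothesis Y_indep : mutually_independent Y.

Let Yf n : T -> R := Y n.

Definition exceed_at_range (l b : R) (n i : nat) : set R :=
  if (i < n)%N then [set` `]-oo, l]] else [set` `]b, +oo[].

Lemma measurable_exceed_at_range l b n i : measurable (exceed_at_range l b n i).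
Proof. by rewrite /exceed_at_range; case: ifP => _; exact: measurable_itv. Qed.

Lemma exceed_at_bigcap l b n : exceed_at Yf l b n =
  \bigcap_(i in [set` iota 0 n.+1]) (Y i @^-1` exceed_at_range l b n i).
Proof.
apply/seteqP; split => w.
  move=> [Yl bY] i iI; have : i \in iota 0 n.+1 by [].
  rewrite mem_iota add0n ltnS => /andP[_ ilen].
  rewrite /exceed_at_range; case: ltnP => [/Yl|nlei]; first by rewrite /= in_itv.
  by rewrite /= in_itv /= andbT (@anti_leq i n) ?ilen.
move=> Yw; split => [i ilt|].
  have iI : i \in iota 0 n.+1 by rewrite mem_iota /= ltnS (ltnW ilt).
  by have := Yw i iI; rewrite /exceed_at_range ilt /= in_itv.
have nI : n \in iota 0 n.+1 by rewrite mem_iota /= ltnS.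
by have := Yw n nI; rewrite /exceed_at_range ltnn /= in_itv /= andbT.
Qed.

Lemma measurable_exceed_at l b n : measurable (exceed_at Yf l b n).
Proof.
rewrite exceed_at_bigcap; apply: bigcap_measurableType => i _.
exact: measurable_funPTI (measurable_exceed_at_range _ _ _ _).
Qed.

Lemma measurable_exceed_event l c : measurable (exceed_event Yf l c).
Proof.
by rewrite exceed_eventE; apply: bigcupT_measurable => n; exact: measurable_exceed_at.
Qed.

Lemma exceed_at_prob l b n : P (exceed_at Yf l b n) =
  ((1 - survival sigma0 l) ^+ n * survival sigma0 b)%:E.
Proof.
rewrite exceed_at_bigcap Y_indep ?iota_uniq //; last exact: measurable_exceed_at_range.
rewrite -addn1 iotaD big_cat /= big_cons big_nil mule1 add0n.
rewrite Y_law; last exact: measurable_exceed_at_range.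
rewrite /exceed_at_range ltnn (_ : sigma0 @^-1` _ = [set w | b < sigma0 w]); last first.
  by apply/seteqP; split => w /=; rewrite in_itv /= andbT.
rewrite (eq_big_seq (fun _ => (1 - survival sigma0 l)%:E)); last first.
  move=> i; rewrite mem_iota add0n => /andP[_ ilt].
  rewrite Y_law; last exact: measurable_exceed_at_range.
  rewrite /exceed_at_range ilt -prob_rv_le.
  by congr (P0 _); apply/seteqP; split => w /=; rewrite in_itv.
rewrite survivalE prodEFin -EFinM.
by have := prodr_const_nat 0 n (1 - survival sigma0 l); rewrite /index_iota subn0 => ->.
Qed.

Lemma survival_div_le_exceed_prob l c a :
  0 < survival sigma0 l -> l <= a -> c <= a ->
  survival sigma0 a / survival sigma0 l <= fine (P (exceed_event Yf l c)).
Proof.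
move=> gl0 la ca.
have sub : \bigcup_n exceed_at Yf l a n `<=` exceed_event Yf l c.
  rewrite exceed_eventE => w [n _ Dw]; exists n => //.
  by apply: subset_exceed_at Dw; rewrite ge_max la ca.
have partial N :
    series (geometric (survival sigma0 a) (1 - survival sigma0 l)) N
      <= fine (P (exceed_event Yf l c)).
  rewrite -lee_fin fineK; last exact: fin_num_measure (measurable_exceed_event _ _).
  apply: (@le_trans _ _ (P (\bigcup_n exceed_at Yf l a n))).
    rewrite (measure_bigcup P) => [|n _|]; last exact: trivIset_exceed_at;
      last exact: measurable_exceed_at.
    apply: le_trans _ (nneseries_lim_ge N (fun n _ _ => measure_ge0 P _)).
    rewrite /series /= -sumEFin (eq_bigl xpredT) => [|n]; last by rewrite in_setT.
    by apply: lee_sum => n _; rewrite exceed_at_prob /geometric /= mulrC.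
  apply: le_measure sub; rewrite inE.
  - by apply: bigcupT_measurable => n; exact: measurable_exceed_at.
  - exact: measurable_exceed_event.
have q_lt1 : `|1 - survival sigma0 l| < 1.
  by rewrite ger0_norm ?subr_ge0 ?survival_le1 // ltrBlDr ltrDl.
have := @cvg_geometric_series _ (survival sigma0 a) _ q_lt1.
move/cvgr_to_le => /(_ _ (nearW _ partial)).
by rewrite opprB addrC subrK.
Qed.

Hypothesis survival_gt0 : forall x, 0 < survival sigma0 x.

Lemma exceed_prob_ge t hv : 0 < t -> 4 <= hv ->
  Ltail sigma0 (ell (Ltail sigma0) t * hv ^+ 3)
    < Ltail sigma0 (ell (Ltail sigma0) t) * (1 + hv^-1) ->
  1 <= fine (P (exceed_event Yf (ell (Ltail sigma0) t)
                   (t * hv ^+ 2 / rr (Ltail sigma0) t))) * (1 + hv^-1).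
Proof.
set L := Ltail sigma0; move=> t0 hv4 Lbound.
have L_ge1 : forall x, 1 <= L x := Ltail_ge1 survival_gt0.
have le_L : {homo L : x y / x <= y} := le_Ltail survival_gt0.
have hv2 : 2 <= hv by lra.
have t_le := le_ell_mul4 L_ge1 le_L t0 hv2 Lbound.
have l_gt0 : 0 < ell L t := ell_gt0 L_ge1 le_L t0.
rewrite /rr; set l := ell L t in Lbound t_le l_gt0 *.
have Ll_ge1 := L_ge1 l.
have l_le : l <= l * hv ^+ 3 by rewrite ler_peMr ?ltW // !exprS expr0 mulr1; nra.
have c_le : t * hv ^+ 2 / L l <= l * hv ^+ 3.
  rewrite ler_pdivrMr; last by lra.
  have hv2_ge0 : 0 <= hv ^+ 2 by rewrite exprn_ge0 //; lra.
  have : 0 <= l * L l * hv ^+ 2 by rewrite !mulr_ge0 //; lra.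
  rewrite (exprS hv 2); nra.
have k_ge0 : 0 <= 1 + hv^-1 by rewrite addr_ge0 // invr_ge0; lra.
apply: le_trans (ler_wpM2r k_ge0 (survival_div_le_exceed_prob (survival_gt0 l) l_le c_le)).
move: Lbound; rewrite /L /Ltail -!/(survival sigma0 _).
have := survival_gt0 l; have := survival_gt0 (l * hv ^+ 3).
set gl := survival sigma0 l; set ga := survival sigma0 (l * hv ^+ 3).
move=> ga_gt0 gl_gt0.
rewrite -(ltr_pM2l (mulr_gt0 gl_gt0 ga_gt0)) mulfK ?gt_eqF //.
rewrite mulrAC mulrA mulfV ?gt_eqF // mul1r => gl_lt.
by rewrite mulrAC ler_pdivlMr // mul1r mulrC ltW.
Qed.

End iid_first_exceedance.

Lemma cvgr_one_squeeze {R : realType} {T : Type} (F : set_system T) {FF : Filter F}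
    (x h : T -> R) :
  h @ F --> +oo -> (\forall t \near F, x t <= 1) ->
  (\forall t \near F, 1 <= x t * (1 + (h t)^-1)) -> x @ F --> (1 : R).
Proof.
move=> h_oo x_le1 x_ge; apply/cvgrPdist_le => e e_gt0.
have h_ge : \forall t \near F, e^-1 <= h t by move/cvgryPge : h_oo; apply.
near=> t.
have e_le_h : e^-1 <= h t by near: t.
have x_le : x t <= 1 by near: t.
have x_ge' : 1 <= x t * (1 + (h t)^-1) by near: t.
have h_gt0 : 0 < h t by apply: lt_le_trans e_le_h; rewrite invr_gt0.
have he : (h t)^-1 <= e by rewrite -(invrK e) lef_pV2 ?posrE ?invr_gt0.
have : 0 <= (h t)^-1 by rewrite invr_ge0 ltW.
rewrite ger0_norm ?subr_ge0 //; nra.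
Unshelve. all: by end_near.
Qed.

Theorem proposition3p7 (R : realType)
  (d0 : measure_display) (T0 : measurableType d0) (P0 : probability T0 R)
  (sigma0 : {RV P0 >-> R})
  (d : measure_display) (T : measurableType d) (P : probability T R)
  (Y : nat -> {RV P >-> R}) (h : R -> R) :
  P0 [set w | sigma0 w <= 0] = 0%E ->
  slowly_varying (Ltail sigma0) ->
  (forall n (B : set R), measurable B ->
     P (Y n @^-1` B) = P0 (sigma0 @^-1` B)) ->
  mutually_independent Y ->
  h @ +oo --> +oo ->
  littleo_pinfty (fun t => h t ^+ 2) (rr (Ltail sigma0)) ->
  (\forall t \near +oo,
     Ltail sigma0 (ell (Ltail sigma0) t / h t ^+ 3)
       > Ltail sigma0 (ell (Ltail sigma0) t) * (1 - (h t)^-1)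
   /\ Ltail sigma0 (ell (Ltail sigma0) t * h t ^+ 3)
       < Ltail sigma0 (ell (Ltail sigma0) t) * (1 + (h t)^-1)) ->
  P (exceed_event (fun n => Y n) (ell (Ltail sigma0) t0) (t0 * h t0 ^+ 2 / rr (Ltail sigma0) t0)) @[t0 --> +oo] --> 1%E.
Proof.
move=> _ sv Y_law Y_indep h_oo _ L_bounds.
have survival_gt0 := slowly_varying_survival_gt0 sv.
have E_meas t := measurable_exceed_event Y (ell (Ltail sigma0) t)
  (t * h t ^+ 2 / rr (Ltail sigma0) t).
apply: cvg_EFin; first by apply: nearW => t; exact: fin_num_measure.
apply: (cvgr_one_squeeze h_oo).
  by apply: nearW => t; rewrite -lee_fin fineK ?probability_le1 ?fin_num_measure.
near=> t.
have t_gt0 : 0 < t by near: t; apply: nbhs_pinfty_gt; exact: num_real.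
have h_ge4 : 4 <= h t by near: t; move/cvgryPge: h_oo; apply.
have L_bound : Ltail sigma0 (ell (Ltail sigma0) t * h t ^+ 3)
    < Ltail sigma0 (ell (Ltail sigma0) t) * (1 + (h t)^-1).
  by near: t; apply: filterS L_bounds => t [].
exact: (exceed_prob_ge Y_law Y_indep survival_gt0 t_gt0 h_ge4 L_bound).
Unshelve. all: by end_near.
Qed.
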